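(* Let $U$ be a $d\times d$ complex matrix, and define $\mathfrak{C}_{\mathbf{ab}}(U)=\frac{1}{d}\operatorname{tr}\big(D_{\mathbf a}^\dagger U D_{\mathbf b} U^\dagger\big)$ and $\mathfrak{D}_{\mathbf{ab}}(U)=|\mathfrak{C}_{\mathbf{ab}}(U)|^2$ for $\mathbf a,\mathbf b\in\mathbb{Z}_{d_L}^{2n}$. Then the $d^2\times d^2$ matrix $\mathfrak{D}(U)=(\mathfrak{D}_{\mathbf{ab}}(U))_{\mathbf a,\mathbf b}$ is bistochastic (nonnegative with all row sums and all column sums equal to $1$) if and only if $U$ is unitary.
   Context: Let $d_L\ge 2$ and $n\ge1$ be integers and $d=d_L^n$. On $\mathbb{C}^{d_L}$ with computational basis $\{|k\rangle\}_{k\in\mathbb{Z}_{d_L}}$, let $Z|k\rangle=\omega^k|k\rangle$, $X|k\rangle=|k+1\rangle$ (arithmetic mod $d_L$), $\omega=e^{2\pi i/d_L}$, $\tau=-e^{i\pi/d_L}$, and for $(a_1,a_2)\in\mathbb{Z}_{d_L}^2$ set $D_{(a_1,a_2)}=\tau^{a_1a_2}X^{a_1}Z^{a_2}$. For $\mathbf a=\mathbf a_1\oplus\cdots\oplus\mathbf a_n\in\mathbb{Z}_{d_L}^{2n}$ (each $\mathbf a_i\in\mathbb{Z}_{d_L}^2$), the displacement operator on $(\mathbb{C}^{d_L})^{\otimes n}\cong\mathbb{C}^d$ is $D_{\mathbf a}=D_{\mathbf a_1}\otimes\cdots\otimes D_{\mathbf a_n}$. (The case $n=1$ is the single-qudit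 Weyl–Heisenberg group.) *)

(* Complex numbers: an arbitrary numClosedFieldType C
   (this includes the complex numbers 'complex R' for R : realType, and algC). *)
From HB Require Import structures.
From mathcomp Require Import all_boot all_order all_algebra.
From mathcomp Require Export spectral.
Set Implicit Arguments. Unset Strict Implicit. Unset Printing Implicit Defensive.
Import Order.TTheory GRing.Theory Num.Theory.
Local Open Scope ring_scope.
Local Open Scope sesquilinear_scope.

Section Weyl.
Variable C : numClosedFieldType.

(* tau = - e^{i pi / dL};  dL.-root (-1) is the dL-th root of -1 with minimal
   nonnegative argument, i.e. e^{i pi/dL}. *)
Definition wh_tau (dL : nat) : C := - (dL.-root (-1)).
(* omega = e^{2 pi i / dL} = tau^2 *)
Definition wh_omega (dL : nat) : C := (dL.-root (-1)) ^+ 2.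

Definition shift_pow (dL a : nat) : 'M[C]_dL :=
  \matrix_(j < dL, k < dL) ((j : nat) == ((k : nat) + a) %% dL)%N%:R.
Definition clock_pow (dL a : nat) : 'M[C]_dL :=
  \matrix_(j < dL, k < dL) (((j : nat) == k)%:R * wh_omega dL ^+ (a * (k : nat))%N).

(* single-qudit displacement D_(a1,a2) = tau^(a1 a2) X^a1 Z^a2,
   a1, a2 taken as their representatives in {0,...,dL-1} *)
Definition displ1 (dL : nat) (a : 'I_dL * 'I_dL) : 'M[C]_dL :=
  wh_tau dL ^+ ((a.1 : nat) * (a.2 : nat))%N *: (shift_pow dL a.1 *m clock_pow dL a.2).

End Weyl.

(* i-th tensor factor index (big-endian / Kronecker ordering) of a
   computational basis index k of (C^dL)^{\otimes n} = C^(dL^n):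
   k = \sum_i k_i dL^(n-1-i). *)
Lemma digit_lt (dL n : nat) (k : 'I_(dL ^ n)) (i : 'I_n) :
  ((k %/ dL ^ (n.-1 - i)) %% dL < dL)%N.
Proof.
apply: ltn_pmod; case: dL k => [|//] k.
case: n k i => [|n] k [i Hi] //; have := ltn_ord k.
by rewrite [X in (_ < X)%N]exp0n.
Qed.

Definition digit (dL n : nat) (k : 'I_(dL ^ n)) (i : 'I_n) : 'I_dL :=
  Ordinal (digit_lt k i).

(* Z_dL^{2n} = (Z_dL^2)^n *)
Definition phase_pt (dL n : nat) := {ffun 'I_n -> 'I_dL * 'I_dL}.

(* D_a = D_{a_1} (x) ... (x) D_{a_n}, as a dL^n x dL^n matrix (Kronecker product) *)
Definition displ (C : numClosedFieldType) (dL n : nat) (a : phase_pt dL n)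
  : 'M[C]_(dL ^ n) :=
  \matrix_(j, k) \prod_(i < n) @displ1 C dL (a i) (digit j i) (digit k i).

Definition frakC (C : numClosedFieldType) (dL n : nat) (U : 'M[C]_(dL ^ n))
  (a b : phase_pt dL n) : C :=
  (dL ^ n)%:R^-1 * \tr ((@displ C dL n a) ^t* *m U *m @displ C dL n b *m U ^t*).

Definition frakD (C : numClosedFieldType) (dL n : nat) (U : 'M[C]_(dL ^ n))
  (a b : phase_pt dL n) : C :=
  `|frakC U a b| ^+ 2.

Definition bistochastic (C : numClosedFieldType) (I : finType) (M : I -> I -> C) :=
  [/\ forall i j, 0 <= M i j,
      forall i, \sum_j M i j = 1 &
      forall j, \sum_i M i j = 1].

From mathcomp Require Import all_boot all_order all_algebra spectral.
From mathcomp Require Import cyclic separable cyclotomic.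
From mathcomp Require Import ring.
Set Implicit Arguments. Unset Strict Implicit. Unset Printing Implicit Defensive.
Import Order.TTheory GRing.Theory Num.Theory.
Local Open Scope ring_scope.

(* The displacement operators are an orthogonal basis of d x d matrices:
   sum_a D_a[k,j] (D_a[m,l])^* = d [k = m] [j = l].  For one qudit this is the
   orthogonality of the characters of Z_dL, which needs omega to be a
   primitive dL-th root of unity; for n qudits it follows digit by digit.
   By Parseval, with P = U U^*, the a-th row sum of D(U) is
   tr(D_a^* P D_a P) / d and the b-th column sum is |U D_b U^*|^2 / d, and
   both equal 1 when U is unitary.  Conversely, the row sum at a = 0 gives
   tr(P^2) = d, while summing all row sums with the twirling identity
   sum_a tr(D_a^* A D_a B) = d tr(A) tr(B) gives (tr P)^2 = d^2.  Hence
   |P - 1|^2 = tr(P^2) - 2 tr P + d = 0. *)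

Lemma sum_indicator (R : pzSemiRingType) (I : finType) (i : I) (F : I -> R) :
  \sum_j (j == i)%:R * F j = F i.
Proof.
by rewrite (bigD1 i) //= eqxx mul1r big1 ?addr0 // => j /negbTE->; rewrite mul0r.
Qed.

Lemma prod_indicator (R : comPzSemiRingType) (I : finType) (P : pred I) :
  \prod_i (P i)%:R = [forall i, P i]%:R :> R.
Proof.
have [P_all|/forallPn[i /negbTE Pi]] := boolP [forall i, P i].
  by rewrite big1 // => i _; rewrite (forallP P_all).
by rewrite (bigD1 i) //= Pi mul0r.
Qed.

Section RootsOfUnity.
Variable C : numClosedFieldType.
Implicit Types (x y z u xi : C) (t : nat).

Lemma prim_root_exists t : (0 < t)%N -> exists xi : C, t.-primitive_root xi.
Proof.
move=> t_gt0; have [rs Drs] := closed_field_poly_normal ('X^t - 1 : {poly C}).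
rewrite (monicP (monicXnsubC 1 t_gt0)) scale1r in Drs.
have rs_unity : all t.-unity_root rs.
  by apply/allP => z z_rs; rewrite /root_of_unity Drs root_prod_XsubC.
have size_rs : (t < (size rs).+1)%N.
  by rewrite -(size_prod_XsubC rs id) -Drs size_XnsubC.
have [|xi _] := hasP (has_prim_root t_gt0 rs_unity _ size_rs); last by exists xi.
by rewrite -separable_prod_XsubC -Drs separable_Xn_sub_1 // pnatr_eq0 -lt0n.
Qed.

Lemma parseval (I J : finType) (f : I -> C) (g : J -> I -> C) (c : C) :
  (forall p q, \sum_b g b p * (g b q)^* = c * (p == q)%:R) ->
  \sum_b `|\sum_p f p * g b p| ^+ 2 = c * \sum_p `|f p| ^+ 2.
Proof.
move=> g_orth.
transitivity (\sum_p \sum_q f p * (f q)^* * \sum_b g b p * (g b q)^*).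
  under eq_bigr => b _ do rewrite normCK rmorph_sum big_distrlr /=.
  rewrite exchange_big; apply: eq_bigr => p _ /=.
  rewrite exchange_big; apply: eq_bigr => q _ /=.
  by rewrite mulr_sumr; apply: eq_bigr => b _; rewrite rmorphM /=; ring.
rewrite mulr_sumr; apply: eq_bigr => p _.
under eq_bigr => q _ do rewrite g_orth mulrCA -mulrA.
rewrite (bigD1 p) //= big1 ?addr0 => [|q neq_qp].
  by rewrite eqxx mulr1 normCK.
by rewrite eq_sym (negbTE neq_qp) !mulr0.
Qed.

Lemma normC_expr_eq1 z t : (0 < t)%N -> `|z ^+ t| = 1 -> `|z| = 1.
Proof. by move=> t_gt0 /eqP; rewrite normrX pexpr_eq1 // => /eqP. Qed.

Lemma mulC_conj_norm1 z : `|z| = 1 -> z * z^* = 1.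
Proof. by move=> z1; rewrite -normCK z1 expr1n. Qed.

Lemma norm_prim_root t xi : t.-primitive_root xi -> `|xi| = 1.
Proof.
move=> xi_prim; apply: (normC_expr_eq1 (prim_order_gt0 xi_prim)).
by rewrite prim_expr_order // normr1.
Qed.

Lemma sum_prim_root_char t xi (j l : 'I_t) : t.-primitive_root xi ->
  \sum_(k < t) xi ^+ (k * j) * (xi ^+ (k * l))^* = t%:R * (j == l)%:R.
Proof.
move=> xi_prim; have xi_t := prim_expr_order xi_prim.
have xi_conj := mulC_conj_norm1 (norm_prim_root xi_prim).
set q := xi ^+ j * xi^* ^+ l.
have termE k : xi ^+ (k * j) * (xi ^+ (k * l))^* = q ^+ k.
  by rewrite rmorphXn /= exprMn -!exprM (mulnC j) (mulnC l).
under eq_bigr => k _ do rewrite termE.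
have [eq_jl|neq_jl] := eqVneq j l.
  rewrite /q eq_jl -exprMn xi_conj expr1n mulr1.
  by under eq_bigr do rewrite expr1n; rewrite sumr_const card_ord.
have q_neq1 : q != 1.
  apply: contra neq_jl => /eqP q1; have : xi ^+ j = xi ^+ l.
    by rewrite -[RHS]mul1r -q1 -mulrA -exprMn (mulrC xi^*) xi_conj expr1n mulr1.
  by move/eqP; rewrite (eq_prim_root_expr xi_prim) !modn_small // => /eqP/val_inj.
have q_t : q ^+ t = 1.
  by rewrite exprMn -!exprM !(mulnC _ t) !exprM xi_t -rmorphXn xi_t rmorph1 !expr1n mulr1.
have := subrX1 q t; rewrite q_t subrr mulr0 => /esym/eqP.
by rewrite mulf_eq0 subr_eq0 (negbTE q_neq1) => /eqP.
Qed.

Lemma sum_norm_geometric t xi z : t.-primitive_root xi -> `|z| = 1 ->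
  \sum_(k < t) `|\sum_(j < t) (z * xi ^+ k) ^+ j| ^+ 2 = (t * t)%:R.
Proof.
move=> xi_prim z1.
under eq_bigr => k _ do under eq_bigr => j _ do rewrite exprMn -exprM.
rewrite (@parseval _ _ (fun j : 'I_t => z ^+ j)
  (fun k j : 'I_t => xi ^+ (k * j)) t%:R).
  under eq_bigr => j _ do rewrite normrX z1 expr1n.
  by rewrite sumr_const card_ord expr1n natrM.
by move=> j l; rewrite sum_prim_root_char.
Qed.

(* With S := sum_(j < t) y ^+ j we have 1 - x = (1 - y) S, and the S for the
   t roots y of x have mean square norm t > 1. *)
Lemma exists_root_closer_to1 t x : (1 < t)%N -> `|x| = 1 -> x != 1 ->
  exists y, [/\ y ^+ t = x, `|y| = 1 & `|1 - y| < `|1 - x|].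
Proof.
move=> t_gt1 x1 x_neq1; have t_gt0 := ltnW t_gt1.
have [xi xi_prim] : exists xi : C, t.-primitive_root xi := prim_root_exists t_gt0.
have xi_t := prim_expr_order xi_prim.
pose z := t.-root x; have z_t : z ^+ t = x by rewrite rootCK.
have z1 : `|z| = 1 by apply: (normC_expr_eq1 t_gt0); rewrite z_t.
pose S k := \sum_(j < t) (z * xi ^+ k) ^+ j.
have [k S_gt1] : exists k : 'I_t, 1 < `|S k|.
  apply/existsP; apply: contraT => /existsPn S_le1.
  have : (t * t)%:R <= \sum_(k < t) (1 : C).
    rewrite -(sum_norm_geometric xi_prim z1); apply: ler_sum => k _.
    by rewrite expr_le1 // real_leNgt ?S_le1.
  by rewrite sumr_const card_ord ler_nat leqNgt ltn_Pmull.
have y_t : (z * xi ^+ k) ^+ t = x.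
  by rewrite exprMn z_t exprAC xi_t expr1n mulr1.
exists (z * xi ^+ k); split => //.
  by rewrite normrM normrX z1 (norm_prim_root xi_prim) expr1n mulr1.
have factor1B : 1 - x = (1 - z * xi ^+ k) * S k.
  by rewrite -y_t -opprB subrX1 -mulNr opprB.
have dist_y_gt0 : 0 < `|1 - z * xi ^+ k|.
  have : 1 - x != 0 by rewrite subr_eq0 eq_sym.
  by rewrite normr_gt0 factor1B mulf_eq0 negb_or => /andP[].
by rewrite factor1B normrM ltr_pMr.
Qed.

Lemma sqr_normC_1B u : `|u| = 1 -> `|1 - u| ^+ 2 = 2 - 2 * 'Re u.
Proof.
move=> u1; rewrite normCK ReE (mulrC 2) mulfVK ?pnatr_eq0 // rmorphB rmorph1 /=.
by rewrite mulrBl !mulrBr mulC_conj_norm1 // !mul1r mulr1; ring.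
Qed.

Lemma rootN1_closest N u : (0 < N)%N -> u ^+ N = -1 ->
  `|1 - N.-root (-1 : C)| <= `|1 - u|.
Proof.
move=> N_gt0; wlog Im_u_ge0 : u / 0 <= 'Im u => [closest_upper|] uN.
  have [|Im_u_lt0] := real_ge0P (Creal_Im u); first by move/closest_upper; apply.
  rewrite -[`|1 - u|]norm_conjC rmorphB rmorph1; apply: closest_upper.
    by rewrite Im_conj oppr_ge0 ltW.
  by rewrite -rmorphXn uN rmorphN1.
have norm1 (v : C) : v ^+ N = -1 -> `|v| = 1.
  by move=> vN; apply: (normC_expr_eq1 N_gt0); rewrite vN normrN1.
rewrite -ler_sqr ?nnegrE // !sqr_normC_1B ?norm1 ?rootCK //.
by rewrite lerD2l lerN2 ler_pM2l ?ltr0n // rootC_Re_max.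
Qed.

(* If r ^+ 2 had order m < N, then r ^+ m = -1 and a root of r closer to 1
   would be an N-th root of -1 with larger real part than r. *)
Lemma rootN1_sqr_prim_root N :
  (1 < N)%N -> N.-primitive_root (N.-root (-1 : C) ^+ 2).
Proof.
move=> N_gt1; have N_gt0 := ltnW N_gt1.
set r := N.-root (-1 : C); have rN : r ^+ N = -1 by rewrite rootCK.
have r1 : `|r| = 1 by apply: (normC_expr_eq1 N_gt0); rewrite rN normrN1.
have r2N : (r ^+ 2) ^+ N = 1 by rewrite exprAC rN sqrrN expr1n.
have [m m_prim m_dvd] := prim_order_exists N_gt0 r2N.
have [m_eq|m_neq] := eqVneq m N; first by rewrite -m_eq.
exfalso.
have m_gt0 := prim_order_gt0 m_prim.
have N1_neq1 : (-1 : C) != 1 by rewrite eq_sym -addr_eq0 -(natrD C 1 1) pnatr_eq0.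
have rm : r ^+ m = -1.
  have : (r ^+ m) ^+ 2 == 1 by rewrite exprAC prim_expr_order.
  rewrite sqrf_eq1 => /orP[/eqP rm1|/eqP //].
  by move: N1_neq1; rewrite -rN -(divnK m_dvd) mulnC exprM rm1 expr1n eqxx.
have t_gt1 : (1 < N %/ m)%N.
  by rewrite ltn_divRL // mul1n ltn_neqAle m_neq dvdn_leq.
have r_neq1 : r != 1.
  by apply: contra N1_neq1 => /eqP r_eq1; rewrite -rN r_eq1 expr1n.
have [y [y_t _ y_closer]] := exists_root_closer_to1 t_gt1 r1 r_neq1.
have yN : y ^+ N = -1 by rewrite -(divnK m_dvd) exprM y_t rm.
by have := lt_le_trans y_closer (rootN1_closest N_gt0 yN); rewrite ltxx.
Qed.

End RootsOfUnity.

Section ConjugateTranspose.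
Variable C : numClosedFieldType.
Local Open Scope sesquilinear_scope.

Lemma conjmxM m n p (A : 'M[C]_(m, n)) (B : 'M[C]_(n, p)) :
  (A *m B) ^t* = B ^t* *m A ^t*.
Proof. by rewrite trmx_mul map_mxM. Qed.

Lemma conjmx1 n : (1%:M : 'M[C]_n) ^t* = 1%:M.
Proof. by rewrite trmx1 map_mx1. Qed.

Lemma mxtrace_conjmx n (A : 'M[C]_n) : \tr (A ^t*) = (\tr A)^*.
Proof. by rewrite rmorph_sum; apply: eq_bigr => i _; rewrite !mxE. Qed.

Lemma mxtrace_mulE m n (A : 'M[C]_(m, n)) (B : 'M[C]_(n, m)) :
  \tr (A *m B) = \sum_i \sum_j A i j * B j i.
Proof. by apply: eq_bigr => i _; rewrite mxE. Qed.

Lemma mxtrace_mul_conjmxE m n (M : 'M[C]_(m, n)) :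
  \tr (M *m M ^t*) = \sum_i \sum_j `|M i j| ^+ 2.
Proof.
rewrite mxtrace_mulE; apply: eq_bigr => i _; apply: eq_bigr => j _.
by rewrite !mxE normCK.
Qed.

Lemma mxtrace_mul_conjmx_ge0 m n (M : 'M[C]_(m, n)) : 0 <= \tr (M *m M ^t*).
Proof.
by rewrite mxtrace_mul_conjmxE pair_bigA; apply: sumr_ge0 => p _; apply: exprn_ge0.
Qed.

Lemma mxtrace_mul_conjmx_eq0 m n (M : 'M[C]_(m, n)) :
  (\tr (M *m M ^t*) == 0) = (M == 0).
Proof.
apply/idP/eqP => [|->]; last by rewrite mul0mx mxtrace0.
rewrite mxtrace_mul_conjmxE pair_bigA psumr_eq0 => [/allP M0|p _]; last first.
  exact: exprn_ge0.
apply/matrixP => i j; rewrite mxE; apply/eqP.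
by have /implyP/(_ isT) := M0 (i, j) (mem_index_enum _); rewrite sqrf_eq0 normr_eq0.
Qed.

Lemma hermitian_mxtrace_eq1 n (P : 'M[C]_n) :
  P ^t* = P -> \tr P = n%:R -> \tr (P *m P) = n%:R -> P = 1%:M.
Proof.
move=> P_herm trP trPP; apply/eqP; rewrite -subr_eq0 -mxtrace_mul_conjmx_eq0.
have -> : (P - 1%:M) ^t* = P - 1%:M by rewrite linearB /= map_mxB P_herm conjmx1.
by rewrite mulmxBl !mulmxBr !mulmx1 !mul1mx !linearB /= trPP trP mxtrace1 !subrr.
Qed.

End ConjugateTranspose.

Definition addmod (m : nat) (y b : 'I_m) : 'I_m :=
  Ordinal (ltn_pmod (y + b) (leq_ltn_trans (leq0n y) (ltn_ord y))).

Lemma addmod_inj m (y : 'I_m) : injective (addmod y).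
Proof.
move=> b b' /(congr1 val)/eqP; rewrite /= eqn_modDl !modn_small //.
by move/eqP/val_inj.
Qed.

Lemma sum_addmod (V : nmodType) m (y : 'I_m) (F : 'I_m -> V) :
  \sum_b F (addmod y b) = \sum_c F c.
Proof. by rewrite [RHS](reindex_inj (@addmod_inj m y)). Qed.

Section Qudit.
Variables (C : numClosedFieldType) (dL : nat).
Hypothesis dL_gt1 : (1 < dL)%N.

Let dL_gt0 : (0 < dL)%N. Proof. exact: ltnW. Qed.
Local Notation tau := (wh_tau C dL).
Local Notation omega := (wh_omega C dL).

Lemma omega_prim_root : dL.-primitive_root omega.
Proof. exact: rootN1_sqr_prim_root. Qed.

Lemma norm_tau : `|tau| = 1.
Proof.
by rewrite normrN; apply: (normC_expr_eq1 dL_gt0); rewrite rootCK // normrN1.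
Qed.

Lemma displ1E (b : 'I_dL * 'I_dL) (x y : 'I_dL) :
  displ1 C b x y = tau ^+ (b.1 * b.2) * (x == addmod y b.1)%:R * omega ^+ (b.2 * y).
Proof.
rewrite /displ1 !mxE -mulrA; congr (_ * _).
rewrite (bigD1 y) //= big1 ?addr0 => [|k /negbTE neq_ky]; rewrite !mxE.
  by rewrite eqxx mul1r.
by rewrite [(k : nat) == y]neq_ky mul0r mulr0.
Qed.

Lemma sum_displ1_conj (x y z w : 'I_dL) :
  \sum_(b : 'I_dL * 'I_dL) displ1 C b x y * (displ1 C b z w)^* =
  dL%:R * ((x == z) && (y == w))%:R.
Proof.
pose F (b1 b2 : 'I_dL) := ((x == addmod y b1) && (z == addmod w b1))%:R *
  (omega ^+ (b2 * y) * (omega ^+ (b2 * w))^*).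
have termE (b : 'I_dL * 'I_dL) : displ1 C b x y * (displ1 C b z w)^* = F b.1 b.2.
  have tau_unit : tau ^+ (b.1 * b.2) * (tau ^+ (b.1 * b.2))^* = 1.
    by rewrite mulC_conj_norm1 // normrX norm_tau expr1n.
  rewrite !displ1E !rmorphM /= rmorph_nat mulrACA (mulrACA (tau ^+ _)) tau_unit.
  by rewrite mul1r -natrM mulnb.
rewrite (eq_bigr _ (fun b _ => termE b)) -pair_bigA /=.
under eq_bigr => b1 _ do rewrite -mulr_sumr sum_prim_root_char ?omega_prim_root //.
rewrite -mulr_suml mulrCA; congr (_ * _).
have [<-|_] := eqVneq y w; last by rewrite andbF !mulr0.
rewrite andbT !mulr1 (sum_addmod y (fun c => ((x == c) && (z == c))%:R)).
under eq_bigr => c _ do rewrite -[z == c]eq_sym -mulnb natrM mulrC.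
by rewrite sum_indicator eq_sym.
Qed.

Lemma sum_sqr_displ1_col (b : 'I_dL * 'I_dL) (y : 'I_dL) :
  \sum_x `|displ1 C b x y| ^+ 2 = 1.
Proof.
under eq_bigr => x _ do rewrite displ1E !normrM normrX norm_tau normrX
  (norm_prim_root omega_prim_root) !expr1n mul1r mulr1 normr_nat expr2
  -natrM mulnb andbb -[_%:R]mulr1.
exact: sum_indicator.
Qed.

End Qudit.

Section Digits.
Variables (dL n : nat).

Lemma digit_inj (k k' : 'I_(dL ^ n)) : (forall i, digit k i = digit k' i) -> k = k'.
Proof.
move=> eq_digits; apply: val_inj.
suff div_eq j : (j <= n)%N -> (k %/ dL ^ (n - j) = k' %/ dL ^ (n - j))%N.
  by have := div_eq n (leqnn n); rewrite subnn expn0 !divn1.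
elim: j => [_|j IHj lt_jn]; first by rewrite subn0 !divn_small.
have := congr1 val (eq_digits (Ordinal lt_jn)); rewrite /= -subn1 subnAC subn1 -subnS.
move: (IHj (ltnW lt_jn)); rewrite -(subnSK lt_jn) expnSr !divnMA => high_eq low_eq.
by rewrite (divn_eq (k %/ _)%N dL) (divn_eq (k' %/ _)%N dL) high_eq low_eq.
Qed.

Definition digits (k : 'I_(dL ^ n)) : {ffun 'I_n -> 'I_dL} := [ffun i => digit k i].

Lemma digits_bij : bijective digits.
Proof.
apply: inj_card_bij; last by rewrite card_ffun !card_ord.
by move=> k k' /ffunP eq_kk'; apply: digit_inj => i; have := eq_kk' i; rewrite !ffunE.
Qed.

Lemma sum_prod_digits (C : numClosedFieldType) (F : 'I_n -> 'I_dL -> C) :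
  \sum_(k < dL ^ n) \prod_i F i (digit k i) = \prod_i \sum_x F i x.
Proof.
rewrite bigA_distr_bigA (reindex digits) /=; last exact: onW_bij digits_bij.
by apply: eq_bigr => k _; apply: eq_bigr => i _; rewrite ffunE.
Qed.

Lemma eq_digits (k k' : 'I_(dL ^ n)) :
  [forall i, digit k i == digit k' i] = (k == k').
Proof.
by apply/forallP/eqP => [eq_kk'|-> i //]; apply: digit_inj => i; apply/eqP.
Qed.

End Digits.

Section Displacement.
Local Open Scope sesquilinear_scope.
Variables (C : numClosedFieldType) (dL n : nat).
Hypothesis dL_gt1 : (1 < dL)%N.
Local Notation D := (@displ C dL n).

Let dL_gt0 : (0 < dL)%N. Proof. exact: ltnW. Qed.

Lemma sum_displ_conj (k j m l : 'I_(dL ^ n)) :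
  \sum_a D a k j * (D a m l)^* = (dL ^ n)%:R * ((k == m) && (j == l))%:R.
Proof.
under eq_bigr => a _ do rewrite !mxE rmorph_prod -big_split /=.
rewrite -(bigA_distr_bigA (fun i b =>
  displ1 C b (digit k i) (digit j i) * (displ1 C b (digit m i) (digit l i))^*)).
under eq_bigr => i _ do rewrite sum_displ1_conj //.
rewrite big_split /= prodr_const card_ord natrX prod_indicator -!eq_digits.
congr (_ * (nat_of_bool _)%:R).
apply/idP/idP => [/forallP digits_eq|/andP[/forallP eq_km /forallP eq_jl]].
  by apply/andP; split; apply/forallP => i; have /andP[] := digits_eq i.
by apply/forallP => i; rewrite eq_km eq_jl.
Qed.

Definition phase0 : phase_pt dL n := [ffun => (Ordinal dL_gt0, Ordinal dL_gt0)].

Lemma displ_phase0 : D phase0 = 1%:M.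
Proof.
apply/matrixP => j k; rewrite !mxE -eq_digits -prod_indicator.
have addmod0 (y : 'I_dL) : addmod y (Ordinal dL_gt0) = y.
  by apply: val_inj; rewrite /= addn0 modn_small.
by apply: eq_bigr => i _; rewrite ffunE displ1E //= addmod0 !muln0 !expr0 mul1r mulr1.
Qed.

Lemma card_phase_pt : #|phase_pt dL n| = (dL ^ n * dL ^ n)%N.
Proof. by rewrite card_ffun card_prod !card_ord expnMn. Qed.

Lemma sum_sqr_displ_col a (j : 'I_(dL ^ n)) : \sum_k `|D a k j| ^+ 2 = 1.
Proof.
under eq_bigr => k _ do rewrite mxE normr_prod -prodrXl.
rewrite (sum_prod_digits (fun i x => `|displ1 C (a i) x (digit j i)| ^+ 2)).
by rewrite big1 // => i _; rewrite sum_sqr_displ1_col.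
Qed.

Lemma mxtrace_displ_conj a : \tr ((D a) ^t* *m D a) = (dL ^ n)%:R.
Proof.
rewrite mxtrace_mulC mxtrace_mul_conjmxE exchange_big /=.
under eq_bigr do rewrite sum_sqr_displ_col.
by rewrite sumr_const card_ord.
Qed.

End Displacement.

Section FrakD.
Variables (C : numClosedFieldType) (dL n : nat).
Hypothesis dL_gt1 : (1 < dL)%N.
Local Open Scope sesquilinear_scope.
Local Notation d := (dL ^ n)%N.
Local Notation D := (@displ C dL n).

Lemma sum_sqr_mxtrace_displ (M : 'M[C]_d) :
  \sum_b `|\tr (M *m D b)| ^+ 2 = d%:R * \tr (M *m M ^t*).
Proof.
have trE b : \tr (M *m D b) = \sum_(p : 'I_d * 'I_d) M p.1 p.2 * D b p.2 p.1.
  by rewrite mxtrace_mulE pair_bigA.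
under eq_bigr do rewrite trE.
rewrite (@parseval _ _ _ (fun p => M p.1 p.2) (fun b p => D b p.2 p.1) d%:R).
  by rewrite mxtrace_mul_conjmxE pair_bigA.
by move=> [i j] [k l]; rewrite sum_displ_conj // xpair_eqE andbC.
Qed.

Lemma sum_mxtrace_twirl (A B : 'M[C]_d) :
  \sum_a \tr ((D a) ^t* *m A *m D a *m B) = d%:R * \tr A * \tr B.
Proof.
have termE a : \tr ((D a) ^t* *m A *m D a *m B) =
    \sum_i \sum_l \sum_k \sum_j A j k * B l i * (D a k l * (D a j i)^*).
  rewrite mxtrace_mulE; apply: eq_bigr => i _; apply: eq_bigr => l _.
  rewrite mxE mulr_suml; apply: eq_bigr => k _; rewrite mxE !mulr_suml.
  by apply: eq_bigr => j _; rewrite !mxE; ring.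
under eq_bigr do rewrite termE.
transitivity (\sum_i \sum_l (l == i)%:R *
    (B l i * \sum_k \sum_j (j == k)%:R * (A j k * d%:R))).
  rewrite exchange_big; apply: eq_bigr => i _; rewrite exchange_big.
  apply: eq_bigr => l _; rewrite !mulr_sumr exchange_big; apply: eq_bigr => k _.
  rewrite !mulr_sumr exchange_big; apply: eq_bigr => j _.
  rewrite -mulr_sumr sum_displ_conj // -mulnb natrM (eq_sym k j); ring.
under eq_bigr => i _ do rewrite sum_indicator.
under eq_bigr => i _ do under eq_bigr => k _ do rewrite sum_indicator.
by rewrite -!mulr_suml /mxtrace; ring.
Qed.

Let d_neq0 : (d%:R : C) != 0.
Proof. by rewrite pnatr_eq0 expn_eq0 negb_and -lt0n ltnW. Qed.

Variable U : 'M[C]_d.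
Local Notation P := (U *m U ^t*).

Lemma frakDE a b :
  frakD U a b = d%:R^-1 ^+ 2 * `|\tr ((D a) ^t* *m U *m D b *m U ^t*)| ^+ 2.
Proof. by rewrite /frakD /frakC normrM exprMn normfV normr_nat. Qed.

Lemma sum_frakD_row a :
  \sum_b frakD U a b = d%:R^-1 * \tr ((D a) ^t* *m P *m D a *m P).
Proof.
pose M := U ^t* *m (D a) ^t* *m U.
have trE b : \tr ((D a) ^t* *m U *m D b *m U ^t*) = \tr (M *m D b).
  by rewrite mxtrace_mulC !mulmxA.
under eq_bigr => b _ do rewrite frakDE trE.
rewrite -mulr_sumr sum_sqr_mxtrace_displ // expr2 -mulrA mulKf //; congr (_ * _).
by rewrite /M !conjmxM !trmxCK -!mulmxA mxtrace_mulC !mulmxA.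
Qed.

Lemma sum_frakD_col b (N := U *m D b *m U ^t*) :
  \sum_a frakD U a b = d%:R^-1 * \tr (N *m N ^t*).
Proof.
have trE a : \tr ((D a) ^t* *m U *m D b *m U ^t*) = (\tr (N ^t* *m D a))^*.
  by rewrite -mxtrace_conjmx conjmxM trmxCK /N !mulmxA.
under eq_bigr => a _ do rewrite frakDE trE norm_conjC.
rewrite -mulr_sumr sum_sqr_mxtrace_displ // trmxCK mxtrace_mulC.
by rewrite expr2 -mulrA mulKf.
Qed.

Lemma frakD_bistochastic : U \is unitarymx -> bistochastic (frakD U).
Proof.
move/unitarymxP => UUt; have UtU : U ^t* *m U = 1%:M := mulmx1C UUt.
split=> [a b|a|b]; first exact/exprn_ge0/normr_ge0.
  by rewrite sum_frakD_row UUt !mulmx1 mxtrace_displ_conj // mulVf.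
rewrite sum_frakD_col !conjmxM trmxCK !mulmxA -(mulmxA _ (U ^t*)) UtU mulmx1.
by rewrite mxtrace_mulC !mulmxA UtU mul1mx mxtrace_mulC mxtrace_displ_conj // mulVf.
Qed.

Lemma unitary_of_frakD_bistochastic : bistochastic (frakD U) -> U \is unitarymx.
Proof.
case=> _ row_sum1 _.
have P_herm : P ^t* = P by rewrite conjmxM trmxCK.
have trPP : \tr (P *m P) = d%:R.
  have := row_sum1 (phase0 n dL_gt1).
  rewrite sum_frakD_row displ_phase0 conjmx1 mul1mx mulmx1.
  by move/(canRL (mulVKf d_neq0)); rewrite mulr1.
have trP : \tr P = d%:R.
  have total : \sum_a \sum_b frakD U a b = (d * d)%:R.
    by rewrite (eq_bigr (fun=> 1)) // sumr_const card_phase_pt.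
  move: total; under eq_bigr do rewrite sum_frakD_row.
  rewrite -mulr_sumr sum_mxtrace_twirl // !mulrA mulVf // mul1r natrM -!expr2.
  by move/eqP; rewrite eqrXn2 ?ler0n ?mxtrace_mul_conjmx_ge0 // => /eqP.
by apply/unitarymxP; apply: hermitian_mxtrace_eq1.
Qed.

End FrakD.

Theorem lemma1 (C : numClosedFieldType) (dL n : nat) (hdL : (2 <= dL)%N)
  (hn : (1 <= n)%N) (U : 'M[C]_(dL ^ n)) :
  bistochastic (frakD U) <-> U \is unitarymx.
Proof.
by split; [apply: unitary_of_frakD_bistochastic | apply: frakD_bistochastic].
Qed.
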